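(* Let $X$ be a set and let $\Omega$ be a class of double sequences in $X$ (called convergent double sequences), each $x\in\Omega$ being associated with one or more elements of $X$ called limits of $x$, subject to the following conditions: (i) for every $p\in X$, the constant double sequence $x_{ij}=p$ belongs to $\Omega$ and has $p$ as a limit; (ii) if $x\in\Omega$ has limit $l$ and $z$ is obtained from $x$ by addition of finitely many terms, then $z\in\Omega$ and $z$ has limit $l$; (iii) if $A,B$ are nonempty disjoint subsets of $X$ and $x\in\Omega$ has all terms in $A\cup B$ and has limit $p$, then there is $y\in\Omega$ with limit $p$, whose range is a subset of the range of $x$, and whose terms lie either all in $A$ or all in $B$; (iv) if $x=\{x_{ij}\}\in\Omega$ has limit $p$ and $\{x_n\}_{n\in\mathbb{N}}$ is a sequence such that for each $n$, $x_n=x_{i_nj_n}$ for some $i_n>n$, $j_n>n$, then the double sequence $y_{ij}=x_i$ ($i,j\in\mathbb{N}$) belongs to $\Omega$ and has limit $p$. Call a subset $G\subseteq X$ open if and only if no member of $\Omega$ all of whose terms lie in $X\setminus G$ has a limit in $G$. Then the collection $\tau$ of such open sets is a topology on $X$.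
   Context: Addition of one term to a double sequence $\{x_{ij}\}$ in $X$: given $y\in X$, (a) row insertion: for fixed $m,n\in\mathbb{N}$, inserting $y$ between $x_{mn}$ and $x_{m,n+1}$ gives $\{y_{ij}\}$ with, for $i=m$: $y_{mj}=x_{mj}$ if $j\le n$, $y_{m,n+1}=y$, $y_{mj}=x_{m,j-1}$ if $j>n+1$; and $y_{ij}=x_{ij}$ for $i\ne m$. (b) column insertion: for fixed $m,n$, inserting $y$ between $x_{mn}$ and $x_{m+1,n}$ gives $\{y_{ij}\}$ with, for $j=n$: $y_{in}=x_{in}$ if $i\le m$, $y_{m+1,n}=y$, $y_{in}=x_{i-1,n}$ if $i>m+1$; and $y_{ij}=x_{ij}$ for $j\ne n$. Addition of finitely many terms $y_1,\dots,y_r$ means performing such single-term insertions successively, one for each $y_s$, $r$ times. The topology $\tau$ is called the convergence topology and $(X,\tau)$ a $d$-limit space. *)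

From Stdlib Require Import Arith.

Definition dseq (X : Type) := nat -> nat -> X.

Definition row_insert {X : Type} (x : dseq X) (m n : nat) (y : X) : dseq X :=
  fun i j =>
    if Nat.eqb i m then
      (if Nat.leb j n then x i j
       else if Nat.eqb j (S n) then y
       else x i (j - 1))
    else x i j.

Definition col_insert {X : Type} (x : dseq X) (m n : nat) (y : X) : dseq X :=
  fun i j =>
    if Nat.eqb j n then
      (if Nat.leb i m then x i j
       else if Nat.eqb i (S m) then y
       else x (i - 1) j)
    else x i j.

(* z is obtained from x by addition of finitely many terms
   (successive single-term row/column insertions). *)
Inductive adds_finitely {X : Type} : dseq X -> dseq X -> Prop :=
| adds_refl : forall x, adds_finitely x x
| adds_row : forall x z m n y,
    adds_finitely x z -> adds_finitely x (row_insert z m n y)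
| adds_col : forall x z m n y,
    adds_finitely x z -> adds_finitely x (col_insert z m n y).

(* Open sets w.r.t. the limit relation lim (x is in Omega iff it has a limit). *)
Definition d_open {X : Type} (lim : dseq X -> X -> Prop) (G : X -> Prop) : Prop :=
  forall (x : dseq X) (l : X),
    lim x l -> (forall i j, ~ G (x i j)) -> ~ G l.

Definition is_topology {X : Type} (tau : (X -> Prop) -> Prop) : Prop :=
  tau (fun _ => False) /\
  tau (fun _ => True) /\
  (forall F : (X -> Prop) -> Prop,
      (forall U, F U -> tau U) -> tau (fun p => exists U, F U /\ U p)) /\
  (forall U V, tau U -> tau V -> tau (fun p => U p /\ V p)).

From Stdlib Require Import Arith Classical.

(* Only the intersection axiom needs work, and only condition (iii): a double
   sequence avoiding [U ∩ V] with limit in [U ∩ V] has its terms in the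
   disjoint sets [X \ U] and [U \ V]; by (iii) some subsequence with the same
   limit lies entirely in one of them, contradicting openness of [U] or of [V].
   When one of the two sets is empty, [x] itself already avoids [U] or [V]. *)

Section ConvergenceTopology.

Variables (X : Type) (Omega : dseq X -> Prop) (lim : dseq X -> X -> Prop).

Definition conv_open (G : X -> Prop) : Prop :=
  forall x l, Omega x -> lim x l -> (forall i j, ~ G (x i j)) -> ~ G l.

Lemma conv_open_empty : conv_open (fun _ => False).
Proof. intros x l _ _ _ H; exact H. Qed.

Lemma conv_open_full : conv_open (fun _ => True).
Proof. intros x l _ _ H _; exact (H 0 0 I). Qed.

Lemma conv_open_bigcup (F : (X -> Prop) -> Prop) :
  (forall U, F U -> conv_open U) -> conv_open (fun p => exists U, F U /\ U p).
Proof.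
  intros HF x l Ox Lx Hx [U [FU Ul]].
  apply (HF U FU x l Ox Lx); [|exact Ul].
  intros i j Ui; apply (Hx i j); exists U; auto.
Qed.

Hypothesis split_limit : forall (A B : X -> Prop) (x : dseq X) (p : X),
  (exists a, A a) -> (exists b, B b) -> (forall q, A q -> B q -> False) ->
  Omega x -> (forall i j, A (x i j) \/ B (x i j)) -> lim x p ->
  exists y : dseq X, Omega y /\ lim y p /\
    (forall i j, exists i' j', y i j = x i' j') /\
    ((forall i j, A (y i j)) \/ (forall i j, B (y i j))).

Lemma conv_open_setI (U V : X -> Prop) :
  conv_open U -> conv_open V -> conv_open (fun p => U p /\ V p).
Proof.
  intros HU HV x l Ox Lx Hx [Ul Vl].
  assert (x_in_UnotV : forall i j, U (x i j) -> ~ V (x i j))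
    by (intros i j Ux Vx; exact (Hx i j (conj Ux Vx))).
  destruct (classic (exists a, ~ U a)) as [ExA | NoA].
  - destruct (classic (exists b, U b /\ ~ V b)) as [ExB | NoB].
    + destruct (split_limit (fun q => ~ U q) (fun q => U q /\ ~ V q) x l
                  ExA ExB (fun q nU UnV => nU (proj1 UnV)) Ox)
        as [y [Oy [Ly [_ [InA | InB]]]]]; [| exact Lx | |].
      * intros i j; destruct (classic (U (x i j))) as [Ux | nUx];
          [right; auto | left; exact nUx].
      * exact (HU y l Oy Ly InA Ul).
      * exact (HV y l Oy Ly (fun i j => proj2 (InB i j)) Vl).
    + apply (HU x l Ox Lx); [|exact Ul].
      intros i j Ux; apply NoB; exists (x i j); auto.
  - apply (HV x l Ox Lx); [|exact Vl].
    intros i j; apply x_in_UnotV.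
    apply NNPP; intro nUx; apply NoA; eauto.
Qed.

End ConvergenceTopology.

Theorem theorem3p3 (X : Type)
  (Omega : dseq X -> Prop) (lim : dseq X -> X -> Prop)
  (H_lim_Omega : forall x l, lim x l -> Omega x)
  (H_Omega_lim : forall x, Omega x -> exists l, lim x l)
  (H1 : forall p : X, Omega (fun _ _ => p) /\ lim (fun _ _ => p) p)
  (H2 : forall x z l, Omega x -> lim x l -> adds_finitely x z -> Omega z /\ lim z l)
  (H3 : forall (A B : X -> Prop) (x : dseq X) (p : X),
      (exists a, A a) -> (exists b, B b) -> (forall q, A q -> B q -> False) ->
      Omega x -> (forall i j, A (x i j) \/ B (x i j)) -> lim x p ->
      exists y : dseq X, Omega y /\ lim y p /\
        (forall i j, exists i' j', y i j = x i' j') /\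
        ((forall i j, A (y i j)) \/ (forall i j, B (y i j))))
  (H4 : forall (x : dseq X) (p : X) (s : nat -> X),
      Omega x -> lim x p ->
      (forall n, exists i j, n < i /\ n < j /\ s n = x i j) ->
      Omega (fun i _ => s i) /\ lim (fun i _ => s i) p) :
  is_topology (fun G : X -> Prop =>
    forall x l, Omega x -> lim x l -> (forall i j, ~ G (x i j)) -> ~ G l).
Proof.
  split; [| split; [| split]].
  - exact (conv_open_empty X Omega lim).
  - exact (conv_open_full X Omega lim).
  - exact (conv_open_bigcup X Omega lim).
  - exact (conv_open_setI X Omega lim H3).
Qed.
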